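(* For each $k\ge 3$, let $\mathcal S(\eta,k)$ be the $k$-uniform hyperstar consisting of $\eta$ edges pairwise meeting only in a common center vertex $1$. Let $y^{(\eta)}$ be the principal eigenvector of $\mathcal S(\eta,k)$ and $x^{(\eta)}$ the principal eigenvector of its clique-shadow (the windmill graph of $\eta$ copies of $K_k$ sharing vertex $1$). Then $(y^{(\eta)}_1)^k=1/k$ for every $\eta$, and $(x^{(\eta)}_1)^2\to 1/2$ as $\eta\to\infty$. Consequently $\Delta_k\ge \tfrac12-\tfrac1k$, where $\Delta_k=\sup_H\max_v|y_v^k-x_v^2|$ over all connected $k$-uniform hypergraphs $H$ (with $y,x$ the principal eigenvectors of $H$ and $\partial^*H$).
   Context: For a connected $k$-uniform hypergraph $H=([n],E)$, writing $x^e=\prod_{v\in e}x_v$, its principal eigenvector is the unique strictly positive $y$ with $\|y\|_k=1$ and $\rho\, y_i^{k-1}=\sum_{e\ni i}y^{e\setminus\{i\}}$ for all $i$, where $\rho=\max_{\|z\|_k^k=1}k\sum_{e\in E}z^e$. The clique-shadow $\partial^*H$ is the multigraph on $[n]$ in which $\{u,v\}$ has multiplicity $\mu(uv)=|\{e\in E:u,v\in e\}|$; its principal eigenvector is the positive Perron eigenvector of its adjacency matrix (entries $\mu(uv)$), normalized to unit $2$-norm. *)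

From HB Require Import structures.
From mathcomp Require Import all_boot all_order all_algebra.
From mathcomp Require Import all_classical all_reals all_analysis.
Set Implicit Arguments. Unset Strict Implicit. Unset Printing Implicit Defensive.
Import Order.TTheory GRing.Theory Num.Theory.
Local Open Scope ring_scope.

(* A hypergraph on vertex set 'I_n (= [n], 0-indexed) is its edge set E. *)
Definition uniform (n k : nat) (E : {set {set 'I_n}}) : Prop :=
  forall e, e \in E -> #|e| = k.

Definition hconnected (n : nat) (E : {set {set 'I_n}}) : Prop :=
  forall u v : 'I_n,
    connect [rel a b | [exists e in E, (a \in e) && (b \in e)]] u v.

Definition lagr (R : realType) (n : nat) (E : {set {set 'I_n}}) (z : 'I_n -> R) : R :=
  \sum_(e in E) \prod_(v in e) z v.

Definition is_hspec_radius (R : realType) (n k : nat) (E : {set {set 'I_n}}) (rho : R) : Prop :=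
  (exists z : 'I_n -> R, \sum_i `|z i| ^+ k = 1 /\ rho = k%:R * lagr E z) /\
  (forall z : 'I_n -> R, \sum_i `|z i| ^+ k = 1 -> k%:R * lagr E z <= rho).

Definition hprincipal (R : realType) (n k : nat) (E : {set {set 'I_n}}) (y : 'I_n -> R) : Prop :=
  (forall i, 0 < y i) /\ \sum_i y i ^+ k = 1 /\
  exists rho : R, is_hspec_radius k E rho /\
    forall i, rho * y i ^+ k.-1 = \sum_(e in E | i \in e) \prod_(v in e :\ i) y v.

(* multiplicity of {u,v} in the clique-shadow (no loops) *)
Definition mu (n : nat) (E : {set {set 'I_n}}) (u v : 'I_n) : nat :=
  if u == v then 0%N else #|[set e in E | (u \in e) && (v \in e)]|.

(* spectral radius of the adjacency matrix of the clique-shadow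
   = max of the quadratic form on the unit sphere *)
Definition is_shadow_radius (R : realType) (n : nat) (E : {set {set 'I_n}}) (lam : R) : Prop :=
  (exists z : 'I_n -> R, \sum_i z i ^+ 2 = 1 /\
      lam = \sum_u \sum_v (mu E u v)%:R * z u * z v) /\
  (forall z : 'I_n -> R, \sum_i z i ^+ 2 = 1 ->
      \sum_u \sum_v (mu E u v)%:R * z u * z v <= lam).

Definition shadow_principal (R : realType) (n : nat) (E : {set {set 'I_n}}) (x : 'I_n -> R) : Prop :=
  (forall i, 0 < x i) /\ \sum_i x i ^+ 2 = 1 /\
  exists lam : R, is_shadow_radius E lam /\
    forall i, \sum_j (mu E i j)%:R * x j = lam * x i.

(* hyperstar S(eta,k): vertex 0 (= vertex 1 of the paper) is the center;
   edge j is {0} u {1 + j(k-1), ..., (j+1)(k-1)}. *)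
Definition star_edge (k eta : nat) (j : nat) : {set 'I_(eta * (k - 1)).+1} :=
  [set v : 'I_(eta * (k - 1)).+1 |
     (val v == 0%N) || ((1 + j * (k - 1) <= val v)%N && (val v < 1 + j.+1 * (k - 1))%N)].

Definition hyperstar (k eta : nat) : {set {set 'I_(eta * (k - 1)).+1}} :=
  [set star_edge k eta (val j) | j : 'I_eta].

Definition Delta (R : realType) (k : nat) : \bar R :=
  ereal_sup [set d : \bar R | exists (n : nat) (E : {set {set 'I_n}})
      (y x : 'I_n -> R) (v : 'I_n),
      [/\ uniform k E, hconnected E, hprincipal k E y, shadow_principal E x &
          d = (`|y v ^+ k - x v ^+ 2|)%:E]].

From HB Require Import structures.
From mathcomp Require Import all_boot all_order all_algebra.
From mathcomp Require Import all_classical all_reals all_analysis.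
From mathcomp Require Import ring lra zify.
Import Order.TTheory GRing.Theory Num.Theory numFieldNormedType.Exports.

(* A positive solution of the eigenequations of a nonnegative k-form, or of a
   symmetric nonnegative matrix, is automatically principal: writing
   |z_v| = y_v w_v and applying AM-GM on each edge (resp. 2ab <= p a^2 + b^2/p)
   bounds the form by the eigenvalue.  On the hyperstar the vector equal to a at
   the centre and to b on the leaves, with a^k = eta b^k, solves the
   eigenequations, and comparing the equation at the centre with
   k * lagr = rho forces y_1^k = 1/k.  In the windmill graph every leaf carries
   x_1 / d with d = lam - k + 2, so lam d = eta (k - 1) and
   x_1^2 = d / (d + lam); hence 1/2 - x_1^2 = (k - 2) / (2 (d + lam)) is
   O(eta^(-1/2)), and |y_1^k - x_1^2| tends to 1/2 - 1/k. *)

Set Implicit Arguments. Unset Strict Implicit. Unset Printing Implicit Defensive.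
Local Open Scope ring_scope.

Lemma AGM_prod_le_sum_exp (R : realFieldType) (I : finType) (A : {pred I})
    (w : I -> R) (k : nat) :
  #|A| = k -> (forall i, 0 <= w i) ->
  k%:R * \prod_(i in A) w i <= \sum_(i in A) w i ^+ k.
Proof.
move=> cardA w_ge0.
have [->|k_gt0] := posnP k.
  by rewrite mul0r; apply: sumr_ge0 => i _; rewrite expr0.
have kR_gt0 : (0 : R) < k%:R by rewrite ltr0n.
have prod_ge0 : 0 <= \prod_(i in A) w i by apply: prodr_ge0.
have sum_ge0 : 0 <= \sum_(i in A) w i ^+ k by apply: sumr_ge0 => i _; apply: exprn_ge0.
have /leifP := leif_AGM (A := A) (fun i _ => exprn_ge0 k (w_ge0 i)).
rewrite cardA prodrXl => AGM.
rewrite mulrC -ler_pdivlMr // -(ler_pXn2r k_gt0) ?nnegrE ?divr_ge0 //.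
by case: ifP AGM => _ AGM; [rewrite (eqP AGM) | apply: ltW].
Qed.

Section HypergraphEigenvector.
Variables (R : realType) (n k : nat) (E : {set {set 'I_n}}) (y : 'I_n -> R) (rho : R).
Hypotheses (k_gt0 : (0 < k)%N) (Ek : uniform k E) (y_gt0 : forall i, 0 < y i).
Hypothesis y_eig :
  forall i, rho * y i ^+ k.-1 = \sum_(e in E | i \in e) \prod_(v in e :\ i) y v.

Lemma sum_edges_weighted (g : 'I_n -> R) :
  \sum_(e in E) \sum_(v in e) g v * \prod_(u in e) y u = \sum_v g v * (rho * y v ^+ k).
Proof.
under eq_bigr => e _ do rewrite big_mkcond.
rewrite exchange_big /=; apply: eq_bigr => v _.
rewrite -big_mkcondr /= -mulr_sumr; congr (_ * _).
rewrite -(prednK k_gt0) exprS mulrCA y_eig mulr_sumr.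
by apply: eq_bigr => e /andP[_ ve]; rewrite (big_setD1 v ve).
Qed.

Lemma lagr_eigenvector : k%:R * lagr E y = rho * \sum_i y i ^+ k.
Proof.
transitivity (\sum_(e in E) \sum_(v in e) 1 * \prod_(u in e) y u).
  rewrite /lagr mulr_sumr; apply: eq_bigr => e eE.
  by rewrite sumr_const Ek // mulr_natl mul1r.
by rewrite sum_edges_weighted mulr_sumr; apply: eq_bigr => v _; rewrite mul1r.
Qed.

(* With |z_v| = y_v w_v, AM-GM on each edge bounds k z^e by y^e times the sum
   of the w_v^k, and double counting turns this into the eigenvalue times the
   k-norm. *)
Lemma lagr_le_eigenvalue (z : 'I_n -> R) :
  k%:R * lagr E z <= rho * \sum_i `|z i| ^+ k.
Proof.
pose w v := `|z v| / y v.
have zE v : `|z v| = y v * w v by rewrite /w mulrC divfK // gt_eqF.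
have w_ge0 v : 0 <= w v by rewrite /w divr_ge0 // ltW.
have -> : rho * \sum_i `|z i| ^+ k = \sum_v w v ^+ k * (rho * y v ^+ k).
  by rewrite mulr_sumr; apply: eq_bigr => v _; rewrite zE exprMn; ring.
rewrite -sum_edges_weighted.
have lagr_le : lagr E z <= \sum_(e in E) \prod_(v in e) `|z v|.
  apply: le_trans (ler_norm _) _; apply: le_trans (ler_norm_sum _ _ _) _.
  by rewrite (eq_bigr _ (fun e _ => normr_prod _ _ _)).
apply: le_trans (ler_wpM2l (ler0n _ k) lagr_le) _.
rewrite mulr_sumr; apply: ler_sum => e eE.
have -> : \prod_(v in e) `|z v| = \prod_(v in e) y v * \prod_(v in e) w v.
  by rewrite -big_split; apply: eq_bigr => v _; rewrite zE.
rewrite -mulr_suml mulrCA [X in _ <= X]mulrC.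
apply: ler_wpM2l; first by apply: prodr_ge0 => v _; apply: ltW.
exact: AGM_prod_le_sum_exp (Ek eE) w_ge0.
Qed.

Lemma hprincipal_of_eigenvector : \sum_i y i ^+ k = 1 -> hprincipal k E y.
Proof.
move=> y_norm; do 2!split=> //; exists rho; do 2!split=> //.
  exists y; split; last by rewrite lagr_eigenvector y_norm mulr1.
  by rewrite -y_norm; apply: eq_bigr => i _; rewrite ger0_norm // ltW.
by move=> z z_norm; have := lagr_le_eigenvalue z; rewrite z_norm mulr1.
Qed.

End HypergraphEigenvector.

Section QuadraticFormEigenvector.
Variables (R : realFieldType) (n : nat) (M : 'I_n -> 'I_n -> R) (x : 'I_n -> R) (lam : R).
Hypotheses (M_sym : forall u v, M u v = M v u) (M_ge0 : forall u v, 0 <= M u v).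
Hypotheses (x_gt0 : forall i, 0 < x i) (x_eig : forall i, \sum_j M i j * x j = lam * x i).

Lemma qform_eigenvector : \sum_u \sum_v M u v * x u * x v = lam * \sum_i x i ^+ 2.
Proof.
rewrite mulr_sumr; apply: eq_bigr => u _.
transitivity (x u * \sum_v M u v * x v); last by rewrite x_eig; ring.
by rewrite mulr_sumr; apply: eq_bigr => v _; ring.
Qed.

(* Weighting 2 z_u z_v <= p z_u^2 + z_v^2 / p by p = x_v / x_u makes both
   halves collapse to lam * |z|^2 through the eigenequation. *)
Lemma qform_le_eigenvalue (z : 'I_n -> R) :
  \sum_u \sum_v M u v * z u * z v <= lam * \sum_i z i ^+ 2.
Proof.
have weighted_AGM (p a b : R) : 0 < p -> 2 * (a * b) <= p * a ^+ 2 + p^-1 * b ^+ 2.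
  move=> p_gt0.
  have -> : p * a ^+ 2 + p^-1 * b ^+ 2 = 2 * (a * b) + p^-1 * (p * a - b) ^+ 2.
    by field; rewrite gt_eqF.
  by rewrite lerDl mulr_ge0 ?sqr_ge0 // invr_ge0 ltW.
have left_half : \sum_u \sum_v M u v * (x v / x u * z u ^+ 2) = lam * \sum_i z i ^+ 2.
  rewrite mulr_sumr; apply: eq_bigr => u _.
  transitivity (z u ^+ 2 / x u * \sum_v M u v * x v).
    by rewrite mulr_sumr; apply: eq_bigr => v _; ring.
  by rewrite x_eig; field; rewrite gt_eqF.
have right_half :
    \sum_u \sum_v M u v * ((x v / x u)^-1 * z v ^+ 2) = lam * \sum_i z i ^+ 2.
  rewrite -left_half exchange_big /=; apply: eq_bigr => u _; apply: eq_bigr => v _.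
  by rewrite invf_div M_sym.
suff : 2 * \sum_u \sum_v M u v * z u * z v <=
       lam * \sum_i z i ^+ 2 + lam * \sum_i z i ^+ 2 by lra.
rewrite -{1}left_half -right_half -big_split mulr_sumr.
apply: ler_sum => u _; rewrite -big_split mulr_sumr; apply: ler_sum => v _ /=.
rewrite -mulrA mulrCA -mulrDr; apply: ler_wpM2l => //.
by apply: weighted_AGM; rewrite divr_gt0.
Qed.

End QuadraticFormEigenvector.

Lemma mu_sym n (E : {set {set 'I_n}}) u v : mu E u v = mu E v u.
Proof.
rewrite /mu eq_sym; case: eqP => // _.
by apply: eq_card => e; rewrite !inE [(u \in e) && _]andbC.
Qed.

Lemma shadow_principal_of_eigenvector (R : realType) n (E : {set {set 'I_n}})
    (x : 'I_n -> R) lam :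
  (forall i, 0 < x i) -> \sum_i x i ^+ 2 = 1 ->
  (forall i, \sum_j (mu E i j)%:R * x j = lam * x i) -> shadow_principal E x.
Proof.
move=> x_gt0 x_norm x_eig; pose M u v : R := (mu E u v)%:R.
have M_sym u v : M u v = M v u by rewrite /M mu_sym.
have M_ge0 u v : 0 <= M u v by apply: ler0n.
do 2!split=> //; exists lam; do 2!split=> //.
  by exists x; rewrite (qform_eigenvector x_eig) x_norm mulr1.
move=> z z_norm.
by have := qform_le_eigenvalue M_sym M_ge0 x_gt0 x_eig z; rewrite z_norm mulr1.
Qed.

Lemma eq_ord0 n (j : 'I_n.+1) : (j == ord0) = (j == 0%N :> nat).
Proof. by rewrite -(inj_eq val_inj). Qed.

Lemma card_ord_eq_val m J : (J < m)%N -> #|[set j : 'I_m | J == val j]| = 1%N.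
Proof.
move=> J_lt; rewrite -(cards1 (Ordinal J_lt)); apply: eq_card => j.
by rewrite !inE -val_eqE eq_sym.
Qed.

Definition star_block (k v : nat) : nat := v.-1 %/ (k - 1).

Section HyperstarStructure.
Variables (k eta : nat).
Hypothesis km1_gt0 : (0 < k - 1)%N.
Local Notation V := 'I_(eta * (k - 1)).+1.

Definition star_petal J : {set V} := [set v | (v != ord0) && (star_block k v == J)].

Lemma mem_star_edge j (v : V) :
  (v \in star_edge k eta j) = (v == ord0) || (star_block k v == j).
Proof.
rewrite inE eq_ord0; case: eqP => //= v_neq0.
by rewrite /star_block eqn_leq leq_divRL // -[(_ %/ _ <= _)%N]ltnS ltn_divLR //; lia.
Qed.

Lemma star_block_lt (v : V) : v != ord0 -> (star_block k v < eta)%N.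
Proof.
rewrite eq_ord0 /star_block ltn_divLR // => v_neq0.
by have := ltn_ord v; lia.
Qed.

Lemma star_edgeE j : star_edge k eta j = ord0 |: star_petal j.
Proof.
by apply/setP => v; rewrite mem_star_edge in_setU1 inE; case: (v == ord0).
Qed.

Lemma card_star_petal J : (J < eta)%N -> #|star_petal J| = (k - 1)%N.
Proof.
move=> J_lt; set m := (k - 1)%N; have m_gt0 : (0 < m)%N := km1_gt0.
have leaf_lt (t : 'I_m) : (1 + J * m + t < (eta * m).+1)%N.
  have : (J.+1 * m <= eta * m)%N by rewrite leq_mul2r J_lt orbT.
  by have := ltn_ord t; rewrite mulSn; lia.
pose leaf (t : 'I_m) : V := inord (1 + J * m + t).
have leafE t : val (leaf t) = (1 + J * m + t)%N by apply: inordK.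
have leaf_inj : injective leaf.
  by move=> t1 t2 /(congr1 val); rewrite !leafE => /addnI /val_inj.
suff -> : star_petal J = [set leaf t | t : 'I_m] by rewrite card_imset // card_ord.
apply/setP => v; rewrite inE eq_ord0 /star_block -/m; apply/andP/imsetP.
  case=> v_neq0 /eqP v_block; exists (Ordinal (ltn_pmod (val v).-1 m_gt0)) => //.
  by apply: val_inj; rewrite leafE /= -v_block -addnA -divn_eq; lia.
case=> t _ ->; rewrite leafE; split; first by [].
by rewrite -addnA add1n /= divnMDl // divn_small // addn0.
Qed.

Lemma card_star_edge j : (j < eta)%N -> #|star_edge k eta j| = k.
Proof.
move=> j_lt; rewrite star_edgeE cardsU1 card_star_petal // inE eqxx /=; lia.
Qed.

Lemma star_edge_inj : injective (fun j : 'I_eta => star_edge k eta j).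
Proof.
move=> j1 j2 /= same_edge; apply: ord_inj.
have /card_gt0P[v] : (0 < #|star_petal j1|)%N by rewrite card_star_petal.
rewrite inE => /andP[v_neq0 /eqP v_block].
have : v \in star_edge k eta j1 by rewrite mem_star_edge v_block eqxx orbT.
by rewrite same_edge mem_star_edge (negPf v_neq0) -v_block => /eqP.
Qed.

Lemma big_hyperstar (M : nmodType) (F : {set V} -> M) :
  \sum_(e in hyperstar k eta) F e = \sum_(j < eta) F (star_edge k eta j).
Proof. by rewrite big_imset //= => j1 j2 _ _ /star_edge_inj. Qed.

Lemma uniform_hyperstar : uniform k (hyperstar k eta).
Proof. by move=> e /imsetP[j _ ->]; apply: card_star_edge (ltn_ord j). Qed.

Lemma hyperstar_center e : e \in hyperstar k eta -> ord0 \in e.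
Proof. by case/imsetP=> j _ ->; rewrite inE. Qed.

Lemma hconnected_hyperstar : (0 < eta)%N -> hconnected (hyperstar k eta).
Proof.
move=> eta_gt0.
have adj_center (w : V) : [exists e in hyperstar k eta, (w \in e) && (ord0 \in e)].
  have [j w_in] : exists j : 'I_eta, w \in star_edge k eta j.
    have [->|w_neq0] := eqVneq w ord0; first by exists (Ordinal eta_gt0); rewrite inE.
    by exists (Ordinal (star_block_lt w_neq0)); rewrite mem_star_edge eqxx orbT.
  by apply/existsP; exists (star_edge k eta j); rewrite imset_f // w_in inE.
move=> u v; apply: (connect_trans (y := ord0)); apply: connect1 => //=.
have /existsP[e /andP[eE /andP[ve ce]]] := adj_center v.
by apply/existsP; exists e; rewrite eE ve ce.
Qed.

Lemma mu_hyperstar (u v : V) :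
  mu (hyperstar k eta) u v =
  if u == v then 0%N else if (u == ord0) || (v == ord0) then 1%N
  else nat_of_bool (star_block k u == star_block k v).
Proof.
rewrite /mu; case: eqP => // u_neq_v.
have -> : [set e in hyperstar k eta | (u \in e) && (v \in e)] =
    (fun j : 'I_eta => star_edge k eta j) @:
      [set j : 'I_eta | (u \in star_edge k eta j) && (v \in star_edge k eta j)].
  apply/setP => e; rewrite inE; apply/andP/imsetP.
    by case=> /imsetP[j _ ->] uv_in; exists j => //; rewrite inE; exact: uv_in.
  by case=> j; rewrite inE => uv_in ->; split => //; apply/imsetP; exists j.
rewrite card_imset; last exact: star_edge_inj.
have [u0|u_neq0] := eqVneq u ord0; have [v0|v_neq0] := eqVneq v ord0.
- by case: u_neq_v; rewrite u0 v0.
- rewrite u0 /= -[RHS](card_ord_eq_val (star_block_lt v_neq0)).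
  by apply: eq_card => j; rewrite 2![j \in _]inE !mem_star_edge eqxx (negPf v_neq0).
- rewrite v0 /= -[RHS](card_ord_eq_val (star_block_lt u_neq0)).
  by apply: eq_card => j; rewrite 2![j \in _]inE !mem_star_edge eqxx (negPf u_neq0) andbT.
rewrite /=; have [same_block|other_block] := eqVneq (star_block k u) (star_block k v).
  rewrite -[RHS](card_ord_eq_val (star_block_lt u_neq0)); apply: eq_card => j.
  by rewrite 2![j \in _]inE !mem_star_edge (negPf u_neq0) (negPf v_neq0) same_block andbb.
apply/eqP; rewrite cards_eq0; apply/eqP/setP => j; rewrite 2![j \in _]inE !mem_star_edge.
rewrite (negPf u_neq0) (negPf v_neq0); apply/negbTE/andP => -[/eqP bu /eqP bv].
by case/eqP: other_block; rewrite bu bv.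
Qed.

Lemma shadow_row_center (R : nzRingType) (x : V -> R) :
  \sum_j (mu (hyperstar k eta) ord0 j)%:R * x j = \sum_(j | j != ord0) x j.
Proof.
rewrite [RHS]big_mkcond; apply: eq_bigr => j _.
by rewrite mu_hyperstar eq_sym eqxx orTb; case: (j == ord0); rewrite ?mul0r ?mul1r.
Qed.

Lemma shadow_row_leaf (R : nzRingType) (x : V -> R) i : i != ord0 ->
  \sum_j (mu (hyperstar k eta) i j)%:R * x j =
  x ord0 + \sum_(j in star_petal (star_block k i)) x j - x i.
Proof.
move=> i_neq0; rewrite (bigD1 ord0) //= mu_hyperstar (negPf i_neq0) eqxx orbT mul1r.
rewrite [in RHS](bigD1 i) /=; last by rewrite inE i_neq0 eqxx.
rewrite addrCA addrAC subrr add0r; congr (_ + _).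
rewrite big_mkcond [RHS]big_mkcond; apply: eq_bigr => j _.
rewrite mu_hyperstar (negPf i_neq0) inE.
have [->|j_neq0] := eqVneq j ord0; first by [].
have [->|j_neq_i] := eqVneq j i; first by rewrite eqxx mul0r.
rewrite /= andbT [star_block k j == _]eq_sym.
by case: (_ == _); rewrite ?mul0r ?mul1r.
Qed.

End HyperstarStructure.

Lemma powR_invnK (R : realType) (n : nat) (c : R) :
  (0 < n)%N -> 0 <= c -> (c `^ n%:R^-1) ^+ n = c.
Proof.
move=> n_gt0 c_ge0; rewrite -powR_mulrn ?powR_ge0 // -powRrM mulVf ?powRr1 //.
by rewrite pnatr_eq0 -lt0n.
Qed.

Section HyperstarEigenvectors.
Variables (R : realType) (k eta : nat).
Hypotheses (k_ge3 : (3 <= k)%N) (eta_gt0 : (0 < eta)%N).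
Local Notation V := 'I_(eta * (k - 1)).+1.
Let km1_gt0 : (0 < k - 1)%N. Proof. lia. Qed.
Let k_gt0 : (0 < k)%N. Proof. lia. Qed.

Definition star_vector (a b : R) (v : V) : R := if v == ord0 then a else b.

Lemma prod_star_vector_center a b j : (j < eta)%N ->
  \prod_(v in star_edge k eta j :\ ord0) star_vector a b v = b ^+ (k - 1).
Proof.
move=> j_lt; rewrite (star_edgeE _ km1_gt0) setU1K; last by rewrite inE eqxx.
rewrite (eq_bigr (fun _ => b)) ?prodr_const ?card_star_petal // => v.
by rewrite inE /star_vector => /andP[/negPf->].
Qed.

Lemma prod_star_vector_leaf a b (i : V) : i != ord0 ->
  \prod_(v in star_edge k eta (star_block k i) :\ i) star_vector a b v = a * b ^+ (k - 2).
Proof.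
move=> i_neq0; set e := star_edge k eta (star_block k i).
have i_in : i \in e by rewrite mem_star_edge // eqxx orbT.
have ord0_in : ord0 \in e :\ i by rewrite in_setD1 eq_sym i_neq0 mem_star_edge // eqxx.
rewrite (big_setD1 _ ord0_in) /= {1}/star_vector eqxx.
rewrite (eq_bigr (fun _ => b)) ?prodr_const; last first.
  by move=> v; rewrite !in_setD1 /star_vector => /andP[/negPf-> _].
suff -> : #|(e :\ i) :\ ord0| = (k - 2)%N by [].
have := cardsD1 i e; have := cardsD1 ord0 (e :\ i).
rewrite card_star_edge ?star_block_lt // ord0_in i_in /=.
(* The cardinals are generalized because their types mention [k]. *)
by move: #|_ :\ ord0| #|e :\ i| => X Y; lia.
Qed.

Lemma sum_star_vector_leaves (F : R -> R) a b :
  \sum_(j : V | j != ord0) F (star_vector a b j) = (eta * (k - 1))%:R * F b.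
Proof.
rewrite (eq_bigr (fun _ => F b)) => [|j /negPf j_neq0]; last by rewrite /star_vector j_neq0.
by rewrite sumr_const cardC1 card_ord mulr_natl.
Qed.

Lemma star_vector_eig a b : 0 < b -> a ^+ k = eta%:R * b ^+ k ->
  forall i, a / b * star_vector a b i ^+ k.-1 =
    \sum_(e in hyperstar k eta | i \in e) \prod_(v in e :\ i) star_vector a b v.
Proof.
move=> b_gt0 ab i; rewrite -subn1.
have pow_k (c : R) : c ^+ k = c * c ^+ (k - 1) by rewrite -exprS subn1 prednK.
have pow_km1 (c : R) : c ^+ (k - 1) = c * c ^+ (k - 2).
  by rewrite -exprS; congr (_ ^+ _); lia.
have [->|i_neq0] := eqVneq i ord0.
  rewrite (eq_bigl (fun e => e \in hyperstar k eta)); last first.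
    by move=> e; apply/andb_idr/hyperstar_center.
  rewrite big_hyperstar // (eq_bigr _ (fun j _ => prod_star_vector_center a b (ltn_ord j))).
  rewrite sumr_const card_ord /star_vector eqxx -mulr_natl.
  apply: (mulIf (lt0r_neq0 b_gt0)); rewrite mulrAC divfK ?lt0r_neq0 //.
  by rewrite -pow_k ab pow_k; ring.
rewrite big_mkcondr big_hyperstar // (bigD1 (Ordinal (star_block_lt km1_gt0 i_neq0))) //=.
rewrite [X in _ + X]big1 ?addr0 => [|j j_neq]; last first.
  rewrite mem_star_edge // (negPf i_neq0) /=.
  by move: j_neq; rewrite -val_eqE /= eq_sym => /negPf ->.
rewrite mem_star_edge // eqxx orbT prod_star_vector_leaf // /star_vector (negPf i_neq0).
by rewrite pow_km1 mulrA divfK ?lt0r_neq0.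
Qed.

Lemma star_hprincipal : exists y : V -> R, hprincipal k (hyperstar k eta) y.
Proof.
have kR_neq0 : (k%:R : R) != 0 by rewrite pnatr_eq0 -lt0n.
have etaR_neq0 : (eta%:R : R) != 0 by rewrite pnatr_eq0 -lt0n.
pose a : R := k%:R^-1 `^ k%:R^-1.
pose b : R := (k * eta)%:R^-1 `^ k%:R^-1.
have ak : a ^+ k = k%:R^-1 by rewrite powR_invnK // invr_ge0 ler0n.
have bk : b ^+ k = (k * eta)%:R^-1 by rewrite powR_invnK // invr_ge0 ler0n.
have b_gt0 : 0 < b by rewrite powR_gt0 // invr_gt0 ltr0n muln_gt0 k_gt0.
exists (star_vector a b); apply: (hprincipal_of_eigenvector (rho := a / b)) => //.
- exact: uniform_hyperstar.
- by move=> i; rewrite /star_vector; case: ifP => // _; rewrite powR_gt0 // invr_gt0 ltr0n.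
- by apply: star_vector_eig; rewrite // ak bk natrM; field; rewrite etaR_neq0 kR_neq0.
rewrite (bigD1 (ord0 : V)) //= (sum_star_vector_leaves (fun c => c ^+ k)).
rewrite {1}/star_vector eqxx ak bk.
by rewrite !natrM natrB //; field; rewrite etaR_neq0 kR_neq0.
Qed.

Lemma star_center_pow (y : V -> R) :
  hprincipal k (hyperstar k eta) y -> y ord0 ^+ k = k%:R^-1.
Proof.
move=> [y_gt0 [y_norm [rho [_ y_eig]]]].
have kR_neq0 : (k%:R : R) != 0 by rewrite pnatr_eq0 -lt0n.
have := lagr_eigenvector k_gt0 (@uniform_hyperstar _ eta km1_gt0) y_eig.
rewrite y_norm mulr1 => rho_lagr.
have center_lagr : rho * y ord0 ^+ k = lagr (hyperstar k eta) y.
  have -> : y ord0 ^+ k = y ord0 * y ord0 ^+ k.-1 by rewrite -exprS prednK.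
  rewrite mulrCA y_eig.
  rewrite (eq_bigl (fun e => e \in hyperstar k eta)); last first.
    by move=> e; apply/andb_idr/hyperstar_center.
  by rewrite mulr_sumr; apply: eq_bigr => e /hyperstar_center ord0_in; rewrite -big_setD1.
have lagr_gt0 : 0 < lagr (hyperstar k eta) y.
  rewrite /lagr big_hyperstar // (bigD1 (Ordinal eta_gt0)) //= ltr_pwDl //.
    by apply: prodr_gt0 => v _.
  by apply: sumr_ge0 => j _; apply: prodr_ge0 => v _; apply: ltW.
have rho_gt0 : 0 < rho by rewrite -rho_lagr mulr_gt0 // ltr0n.
apply: (mulfI (lt0r_neq0 rho_gt0)); rewrite center_lagr -rho_lagr.
by rewrite mulrAC divff // mul1r.
Qed.

(* Summing the eigenequation over a petal and comparing with the equation at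
   one of its leaves shows that every leaf carries the same value. *)
Lemma shadow_leaf_value (x : V -> R) lam : (forall i, 0 < x i) ->
  (forall i, \sum_j (mu (hyperstar k eta) i j)%:R * x j = lam * x i) ->
  forall i : V, i != ord0 -> x i * (lam - k%:R + 2) = x ord0.
Proof.
move=> x_gt0 x_eig i i_neq0; set J := star_block k i.
set S := \sum_(j in star_petal k eta J) x j.
have leaf_eq v : v \in star_petal k eta J -> lam * x v = x ord0 + S - x v.
  by rewrite inE => /andP[v_neq0 /eqP v_block]; rewrite -x_eig shadow_row_leaf // v_block.
have petal_eq : lam * S = (k%:R - 1) * x ord0 + (k%:R - 2) * S.
  rewrite /S mulr_sumr (eq_bigr _ leaf_eq) !big_split /= sumrN !sumr_const.
  rewrite card_star_petal ?star_block_lt // -[x ord0 *+ _]mulr_natl -[S *+ _]mulr_natl.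
  by rewrite natrB /S; [ring | lia].
have i_in : i \in star_petal k eta J by rewrite inE i_neq0 eqxx.
have xi_le_S : x i <= S.
  by rewrite /S (bigD1 i) //= lerDl; apply: sumr_ge0 => j _; apply: ltW.
have lam_gt0 : 0 < lam.
  by rewrite -(pmulr_lgt0 _ (x_gt0 i)) leaf_eq //; have := x_gt0 ord0; lra.
have key : (lam + 1) * (x i * (lam - k%:R + 2) - x ord0) =
    (lam - k%:R + 2) * (lam * x i - (x ord0 + S - x i)) +
    (lam * S - ((k%:R - 1) * x ord0 + (k%:R - 2) * S)) by ring.
move: key; rewrite leaf_eq // petal_eq !subrr mulr0 addr0 => /eqP.
by rewrite mulf_eq0 gt_eqF ?ltr_pwDl //= subr_eq0 => /eqP.
Qed.

Lemma shadow_center_sq (x : V -> R) : shadow_principal (hyperstar k eta) x ->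
  exists d : R, [/\ 0 < d, d * (d + k%:R - 2) = (eta * (k - 1))%:R &
                    x ord0 ^+ 2 = d / (2 * d + k%:R - 2)].
Proof.
move=> [x_gt0 [x_norm [lam [_ x_eig]]]].
set d := lam - k%:R + 2; set N : R := (eta * (k - 1))%:R.
have leaf_value := shadow_leaf_value x_gt0 x_eig.
have d_gt0 : 0 < d.
  have leaf_neq0 : (ord_max : V) != ord0.
    by rewrite eq_ord0 /= muln_eq0 negb_or -!lt0n eta_gt0.
  by have := x_gt0 ord0; rewrite -(leaf_value _ leaf_neq0) pmulr_rgt0.
have leafE i : i != ord0 -> x i = x ord0 / d.
  by move=> /leaf_value <-; rewrite mulfK ?lt0r_neq0.
have lam_d : lam * d = N.
  have center_eq : lam * x ord0 = N * (x ord0 / d).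
    rewrite -x_eig shadow_row_center // (eq_bigr (fun _ => x ord0 / d)) => [|i /leafE //].
    by rewrite sumr_const cardC1 card_ord mulr_natl.
  apply: (mulIf (lt0r_neq0 (x_gt0 ord0))).
  by rewrite mulrAC center_eq mulrA divfK // lt0r_neq0.
have norm_eq : x ord0 ^+ 2 * (d ^+ 2 + N) = d ^+ 2.
  move: x_norm; rewrite (bigD1 (ord0 : V)) //= (eq_bigr (fun _ => (x ord0 / d) ^+ 2)).
    rewrite sumr_const cardC1 card_ord -mulr_natl -/N => x_norm.
    by rewrite -[RHS]mulr1 -x_norm; field; rewrite lt0r_neq0.
  by move=> i /leafE ->.
have k_ge3R : (3 : R) <= k%:R by rewrite (ler_nat R 3 k).
have D_eq : 2 * d + k%:R - 2 = d + lam by rewrite /d; ring.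
have D_gt0 : 0 < d + lam by rewrite -D_eq; lra.
exists d; split=> //; first by rewrite -lam_d /d; ring.
rewrite D_eq; apply: (mulIf (lt0r_neq0 D_gt0)); rewrite divfK ?lt0r_neq0 //.
by apply: (mulfI (lt0r_neq0 d_gt0)); rewrite -[d * d]expr2 -norm_eq -lam_d; ring.
Qed.

Lemma star_shadow_principal :
  exists x : V -> R, shadow_principal (hyperstar k eta) x.
Proof.
set K : R := k%:R; set N : R := (eta * (k - 1))%:R.
have K_ge3 : 3 <= K by rewrite (ler_nat R 3 k).
have N_gt0 : 0 < N by rewrite ltr0n muln_gt0 eta_gt0.
pose s := Num.sqrt ((K - 2) ^+ 2 + 4 * N).
have s_sq : s ^+ 2 = (K - 2) ^+ 2 + 4 * N.
  by rewrite sqr_sqrtr // addr_ge0 ?sqr_ge0 // mulr_ge0 // ltW.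
have s_gt : K - 2 < s.
  by have := sqrtr_ge0 ((K - 2) ^+ 2 + 4 * N); rewrite -/s; nra.
pose d := (s - (K - 2)) / 2.
have d_gt0 : 0 < d by rewrite /d; lra.
have d_root : d * (d + K - 2) = N.
  rewrite /d; apply: (mulfI (lt0r_neq0 (ltr0n R 4))).
  by rewrite -[4 * N](addKr ((K - 2) ^+ 2)) -s_sq; field.
pose q := Num.sqrt (d ^+ 2 + N).
have q_sq : q ^+ 2 = d ^+ 2 + N by rewrite sqr_sqrtr // ltW // ltr_wpDl // sqr_ge0.
have q_gt0 : 0 < q by rewrite sqrtr_gt0 ltr_wpDl // sqr_ge0.
exists (star_vector (d / q) q^-1).
apply: (shadow_principal_of_eigenvector (lam := d + K - 2)).
- by move=> i; rewrite /star_vector; case: ifP => _; [apply: divr_gt0 | rewrite invr_gt0].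
- rewrite (bigD1 (ord0 : V)) //= (sum_star_vector_leaves (fun c => c ^+ 2)) /=.
  rewrite {1}/star_vector eqxx -/N.
  have -> : (d / q) ^+ 2 + N * q^-1 ^+ 2 = (d ^+ 2 + N) / q ^+ 2.
    by field; rewrite lt0r_neq0.
  by rewrite -q_sq divff // lt0r_neq0 // exprn_gt0.
move=> i; have [->|i_neq0] := eqVneq i ord0.
  rewrite shadow_row_center // (sum_star_vector_leaves id) /star_vector eqxx -/N -d_root.
  by field; rewrite lt0r_neq0.
rewrite shadow_row_leaf // (eq_bigr (fun _ => q^-1)) => [|j]; last first.
  by rewrite inE /star_vector => /andP[/negPf->].
rewrite sumr_const card_star_petal ?star_block_lt // -[q^-1 *+ _]mulr_natl.
rewrite /star_vector eqxx (negPf i_neq0) natrB; last by lia.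
by rewrite -/K; field; rewrite lt0r_neq0.
Qed.

Lemma shadow_center_sq_gap (x : V -> R) (e : R) : 0 < e ->
    ((k%:R - 2) / (2 * e)) ^+ 2 < eta%:R ->
  shadow_principal (hyperstar k eta) x -> 0 <= 2^-1 - x ord0 ^+ 2 <= e.
Proof.
move=> e_gt0 eta_large /shadow_center_sq[d [d_gt0 d_root ->]].
set K : R := k%:R in eta_large d_root *; set t := (K - 2) / (2 * e) in eta_large *.
have K_ge3 : 3 <= K by rewrite (ler_nat R 3 k).
have D_gt0 : 0 < 2 * d + K - 2 by lra.
have -> : 2^-1 - d / (2 * d + K - 2) = (K - 2) / (2 * (2 * d + K - 2)).
  by field; rewrite lt0r_neq0.
apply/andP; split; first by apply: divr_ge0; lra.
have eta_le : eta%:R <= d * (d + K - 2) by rewrite d_root ler_nat leq_pmulr.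
have t_lt : t < 2 * d + K - 2.
  have : d * (d + K - 2) <= (2 * d + K - 2) ^+ 2 by nra.
  rewrite -(ltr_pXn2r (n := 2)) ?nnegrE //; [lra | | lra].
  by rewrite /t divr_ge0 ?mulr_ge0; lra.
by rewrite ler_pdivrMr ?mulr_gt0 //; move: t_lt; rewrite /t ltr_pdivrMr ?mulr_gt0 //; nra.
Qed.

End HyperstarEigenvectors.

Lemma shadow_center_sq_near (R : realType) (k : nat) (e : R) : (3 <= k)%N -> 0 < e ->
  exists M : nat, forall eta, (M <= eta)%N -> (0 < eta)%N /\
    forall x, shadow_principal (hyperstar k eta) x -> 0 <= 2^-1 - x ord0 ^+ 2 <= e.
Proof.
move=> k_ge3 e_gt0; set t : R := (k%:R - 2) / (2 * e).
exists (Num.truncn (t ^+ 2)).+1 => eta eta_ge.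
have eta_gt0 : (0 < eta)%N by apply: leq_trans eta_ge.
split=> // x; apply: (shadow_center_sq_gap k_ge3 eta_gt0 e_gt0).
by apply: lt_le_trans (truncnS_gt _) _; rewrite ler_nat.
Qed.

Local Open Scope classical_set_scope.

Lemma hyperstar_shadow_center_cvg (R : realType) (k : nat)
    (x : forall eta, 'I_(eta * (k - 1)).+1 -> R) :
  (3 <= k)%N -> (forall eta, (0 < eta)%N -> shadow_principal (hyperstar k eta) (x eta)) ->
  (fun eta => x eta ord0 ^+ 2) @ \oo --> (2^-1 : R).
Proof.
move=> k_ge3 x_principal; apply/cvgrPdist_le => e e_gt0.
have [M near_M] := shadow_center_sq_near k_ge3 e_gt0.
exists M => // eta /= eta_ge; have [eta_gt0 gap] := near_M eta eta_ge.
by have /andP[gap_ge0 gap_le] := gap _ (x_principal eta eta_gt0); rewrite ger0_norm.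
Qed.

Lemma Delta_ge_half_sub_inv (R : realType) (k : nat) : (3 <= k)%N ->
  ((2^-1 - k%:R^-1 : R)%:E <= Delta R k)%E.
Proof.
move=> k_ge3; apply/lee_subgt0Pr => e e_gt0.
have [M near_M] := shadow_center_sq_near k_ge3 e_gt0.
have [eta_gt0 gap] := near_M M (leqnn M).
have [y y_principal] := star_hprincipal R k_ge3 eta_gt0.
have [x x_principal] := star_shadow_principal R k_ge3 eta_gt0.
have /andP[_ gap_le] := gap x x_principal.
apply: (@le_trans _ _ (`|y ord0 ^+ k - x ord0 ^+ 2|)%:E).
  rewrite -EFinB lee_fin (star_center_pow k_ge3 eta_gt0 y_principal) ler_normr.
  by apply/orP; right; lra.
apply: ereal_sup_ubound; exists (M * (k - 1)).+1, (hyperstar k M), y, x, ord0.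
split=> //; [apply: uniform_hyperstar | apply: hconnected_hyperstar] => //; lia.
Qed.

Unset Implicit Arguments.

Theorem mainTheorem7 (R : realType) (k : nat) (hk : (3 <= k)%N) :
  (forall eta : nat, (0 < eta)%N ->
     (exists y : 'I_(eta * (k - 1)).+1 -> R, hprincipal k (hyperstar k eta) y) /\
     (forall y : 'I_(eta * (k - 1)).+1 -> R,
        hprincipal k (hyperstar k eta) y -> y ord0 ^+ k = k%:R^-1)) /\
  (forall eta : nat, (0 < eta)%N ->
     exists x : 'I_(eta * (k - 1)).+1 -> R, shadow_principal (hyperstar k eta) x) /\
  (forall x : forall eta : nat, 'I_(eta * (k - 1)).+1 -> R,
     (forall eta : nat, (0 < eta)%N -> shadow_principal (hyperstar k eta) (x eta)) ->
     (fun eta : nat => x eta ord0 ^+ 2) @ \oo --> (2%:R^-1 : R)) /\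
  ((2%:R^-1 - k%:R^-1 : R)%:E <= Delta R k)%E.
Proof.
split.
  move=> eta eta_gt0; split; first exact: star_hprincipal.
  by move=> y; apply: star_center_pow.
split; first by move=> eta; apply: star_shadow_principal.
split; first by move=> x; apply: hyperstar_shadow_center_cvg.
exact: Delta_ge_half_sub_inv.
Qed.
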